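(* Let $S$ be a numerical semigroup and $x\in\mathrm{msg}(S)$ with $x<\mathrm{F}(S)$. Then $S\setminus\{x\}$ is a numerical semigroup and $\mathrm{l}(S\setminus\{x\})=\mathrm{l}(S)+2$.
   Context: A numerical semigroup is a subset $S\subseteq\mathbb{N}$ closed under addition with $0\in S$ and $\mathbb{N}\setminus S$ finite; $\mathrm{F}(S)=\max(\mathbb{Z}\setminus S)$. $\mathrm{msg}(S)$ denotes the (unique, finite) minimal system of generators of $S$, i.e. the elements of $S\setminus\{0\}$ that are not sums of two elements of $S\setminus\{0\}$. $\mathrm{N}(S)=\{s\in S\mid s<\mathrm{F}(S)\}$, $\mathrm{L}(S)=\{x\in\mathbb{N}\setminus S\mid \mathrm{F}(S)-x\notin \mathrm{N}(S)\}$, $\mathrm{l}(S)=\#\mathrm{L}(S)$. *)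

From HB Require Import structures.
From mathcomp Require Import all_boot all_order all_algebra.
From Stdlib Require Import ClassicalEpsilon.
Set Implicit Arguments. Unset Strict Implicit. Unset Printing Implicit Defensive.
Import Order.TTheory GRing.Theory Num.Theory.

Definition numerical_semigroup (S : pred nat) : Prop :=
  [/\ S 0,
      (forall a b, S a -> S b -> S (a + b)) &
      exists N, forall n, N <= n -> S n].

Definition msg (S : pred nat) (x : nat) : Prop :=
  [/\ S x, x != 0 &
      ~ (exists a b, [/\ S a, S b, a != 0, b != 0 & a + b = x])].

(* Specification of F(S) = max (Z \ S) (as an integer; -1 when S = N). *)
Definition is_frob (S : pred nat) (f : int) : Prop :=
  (~~ S (absz f) /\ (0 <= f)%R /\ forall n, (f < n%:Z)%R -> S n)
  \/ (f = (-1)%R /\ forall n, S n).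

(* F(S), chosen by (classical) description; well defined for numerical
   semigroups since the maximum is unique. *)
Definition frob (S : pred nat) : int :=
  epsilon (inhabits 0%R) (is_frob S).

Definition inN (S : pred nat) (z : int) : bool :=
  [&& (0 <= z)%R, S (absz z) & (z < frob S)%R].

Definition inL (S : pred nat) (x : nat) : bool :=
  ~~ S x && ~~ inN S (frob S - x%:Z)%R.

(* l(S) = #L(S). Every element of L(S) is a gap, hence <= F(S), so L(S) is
   contained in [0, |F(S)|]; we count over that range. *)
Definition lnum (S : pred nat) : nat :=
  count (inL S) (iota 0 (absz (frob S)).+1).

(* Removing a minimal generator x keeps S a numerical semigroup, and when
   x < F(S) the Frobenius number stays F := F(S).  A gap y <= F of S \ {x}
   lies in L(S \ {x}) iff it lies in L(S), except for the two new elements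
   x (a gap whose partner F - x is a gap of S, since x + (F - x) = F) and
   F - x (whose partner x is no longer in the semigroup).  Since 2x is in S,
   x <> F - x, so l grows by exactly 2. *)

From HB Require Import structures.
From mathcomp Require Import all_boot all_order all_algebra zify.
From Stdlib Require Import ClassicalEpsilon.
Set Implicit Arguments. Unset Strict Implicit. Unset Printing Implicit Defensive.
Import Order.TTheory GRing.Theory Num.Theory.

Definition remove (S : pred nat) (x : nat) : pred nat := [pred n | S n && (n != x)].

Lemma is_frob_uniq S f g : is_frob S f -> is_frob S g -> f = g.
Proof.
suff le_frob f1 f2 : is_frob S f1 -> is_frob S f2 -> (f1 <= f2)%R.
  by move=> hf hg; apply/eqP; rewrite eq_le !le_frob.
move=> [[nf [f0 hf]]|[-> _]] [[ng [g0 hg]]|[-> hg]] //.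
- case: f1 nf f0 hf => // a nf _ _; case: f2 ng g0 hg => // b _ _ hg.
  rewrite lez_nat leqNgt; apply/negP => ba.
  by move: (hg a); rewrite ltz_nat ba (negbTE nf) => /(_ isT).
- by rewrite hg in nf.
- exact: le_trans g0.
Qed.

Lemma frobE S f : is_frob S f -> frob S = f.
Proof. by move=> hf; apply: (is_frob_uniq _ hf); apply: epsilon_spec; exists f. Qed.

Lemma numerical_semigroup_has_frob S : numerical_semigroup S -> exists f, is_frob S f.
Proof.
case=> _ _ [N HN].
have [gap|nogap] := boolP (has (predC S) (iota 0 N)); last first.
  exists (-1)%R; right; split=> // n; have [/HN//|nN] := leqP N n.
  by move/hasPn: nogap => /(_ n); rewrite mem_iota nN => /(_ isT) /negbNE.
have ex_gap : exists n, ~~ S n && (n < N).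
  by case/hasP: gap => n; rewrite mem_iota => /andP[_ ?] ?; exists n; apply/andP.
have gap_le n : ~~ S n && (n < N) -> n <= N by case/andP=> _ /ltnW.
have [F /andP[nF _] Fmax] := ex_maxnP ex_gap gap_le.
exists (Posz F); left; split=> //; split=> // n; rewrite ltz_nat => Fn.
have [/HN//|nN] := leqP N n; apply/negPn/negP => nn.
by move: (Fmax n); rewrite nn nN leqNgt Fn => /(_ isT).
Qed.

Lemma is_frob_frob S : numerical_semigroup S -> is_frob S (frob S).
Proof. by move/numerical_semigroup_has_frob; apply: epsilon_spec. Qed.

Lemma numerical_semigroup_remove_msg S x :
  numerical_semigroup S -> msg S x -> numerical_semigroup (remove S x).
Proof.
case=> S0 S_add [N HN] [_ x0 x_irr]; split; rewrite /remove /=.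
- by rewrite S0 eq_sym x0.
- move=> a b /andP[Sa ax] /andP[Sb bx]; rewrite S_add //=.
  apply/eqP=> abx; apply: x_irr; exists a, b; split=> //.
  + by apply: contra_neq bx => a0; rewrite -abx a0.
  + by apply: contra_neq ax => b0; rewrite -abx b0 addn0.
- exists (maxn N x.+1) => n; rewrite geq_max => /andP[/HN -> xn] /=.
  by rewrite neq_ltn xn orbT.
Qed.

Lemma is_frob_remove S x (F : nat) : is_frob S F -> x < F -> is_frob (remove S x) F.
Proof.
rewrite /remove; case=> [[nF [_ hF]]|[] //] xF; left; split; first by rewrite /= (negbTE nF).
split=> // n Fn; rewrite /= hF //; apply: contraTneq Fn => ->.
by rewrite ltz_nat -leqNgt ltnW.
Qed.

Lemma sub_gap_notin (S : pred nat) x F : (forall a b, S a -> S b -> S (a + b)) ->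
  S x -> ~~ S F -> x <= F -> ~~ S (F - x).
Proof. by move=> S_add Sx nSF xF; apply: contra nSF => /(S_add _ _ Sx); rewrite subnKC. Qed.

Lemma inL_le_frob S (F y : nat) : frob S = F -> y <= F ->
  inL S y = ~~ S y && ~~ (S (F - y) && (0 < y)).
Proof.
move=> frobS yF; rewrite /inL /inN frobS subzn //= ltz_nat.
by congr (_ && ~~ (_ && _)); apply/idP/idP; lia.
Qed.

Lemma count_addE (T : eqType) (a b c : pred T) (s : seq T) :
  (forall y, y \in s -> a y = b y + c y :> nat) -> count a s = count b s + count c s.
Proof.
elim: s => //= y s IHs abc; rewrite abc ?mem_head // IHs; first by lia.
by move=> z zs; apply: abc; rewrite inE zs orbT.
Qed.

Lemma count_pred2 (T : eqType) (x z : T) (s : seq T) : uniq s ->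
  x \in s -> z \in s -> x != z -> count (pred2 x z) s = 2.
Proof.
move=> s_uniq xs zs xz.
have disj : count (predI (pred1 x) (pred1 z)) s = 0.
  rewrite (eq_count (a2 := pred0)) ?count_pred0 // => y /=.
  by apply/andP=> -[/eqP-> /eqP zx]; rewrite zx eqxx in xz.
have := count_predUI (pred1 x) (pred1 z) s.
by rewrite disj addn0 !count_uniq_mem // xs zs.
Qed.

Section RemoveGenerator.

Variables (S : pred nat) (x F : nat).
Hypotheses (S_add : forall a b, S a -> S b -> S (a + b)) (Sx : S x)
  (F_frob : is_frob S F) (xF : x < F).

Let frobS : frob S = F := frobE F_frob.
Let frob_remove : frob (remove S x) = F := frobE (is_frob_remove F_frob xF).

Let nSF : ~~ S F.
Proof. by case: F_frob => [[]|[]]. Qed.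

Let nS_Fx : ~~ S (F - x) := sub_gap_notin S_add Sx nSF (ltnW xF).

Lemma inL_remove y : y <= F -> (inL (remove S x) y : nat) = inL S y + pred2 x (F - x) y.
Proof.
move=> yF; rewrite (inL_le_frob frob_remove yF) (inL_le_frob frobS yF) /remove /=.
have [->|yx] := eqVneq y x; first by rewrite Sx (negbTE nS_Fx).
have [->|yFx] := eqVneq y (F - x).
  by rewrite subKn ?(ltnW xF) // (negbTE nS_Fx) Sx eqxx subn_gt0 xF andbF.
have Fyx : F - y != x by apply: contraNneq yFx => <-; rewrite subKn.
by rewrite Fyx /= !andbT addn0.
Qed.

Lemma lnum_remove : lnum (remove S x) = lnum S + 2.
Proof.
rewrite /lnum frobS frob_remove (count_addE (b := inL S) (c := pred2 x (F - x))).
  rewrite count_pred2 ?iota_uniq ?mem_iota ?ltnS ?leq_subr ?(ltnW xF) //.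
  by apply: contraTneq nS_Fx => <-; rewrite negbK.
by move=> y; rewrite mem_iota ltnS => /andP[_]; exact: inL_remove.
Qed.

End RemoveGenerator.

Theorem lemma8 (S : pred nat) (x : nat) :
  numerical_semigroup S -> msg S x -> (x%:Z < frob S)%R ->
  numerical_semigroup [pred n | S n && (n != x)] /\
  lnum [pred n | S n && (n != x)] = (lnum S + 2)%N.
Proof.
move=> hS hx xF; split; first exact: numerical_semigroup_remove_msg.
have [_ S_add _] := hS; have [Sx _ _] := hx.
move: xF (is_frob_frob hS); case: (frob S) => [F|//].
by rewrite ltz_nat => xF F_frob; exact: (lnum_remove S_add Sx F_frob xF).
Qed.
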